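(* There is a constant $\alpha'\in(0,\pi/2)$ such that the following holds. Let $P,P'\subset\mathbb R^3$ be two open cuboids and $Q$ the convex hull of $P\cup P'$. If $x_c$ is a vertex of $P$ such that $d(x_c,P')=d_H(P,P')$, then $x_c$ is a vertex of $Q$, and $Q$ is contained in an open spherical cone with vertex $x_c$ and opening angle $2\alpha'$. The constant $\alpha'$ is independent of $P$, $P'$ and their location.
   Context: An open cuboid is the image of $]0,a[\times]0,b[\times]0,c[$ ($a,b,c>0$) under a rigid motion. $d_H(P,P')=\max(\sup_{x\in P}d(x,P'),\sup_{x'\in P'}d(x',P))$ is the Hausdorff distance. An open spherical cone with vertex $x_c$, axis unit vector $v$ and opening angle $2\theta$ is $\{x\ne x_c:(x-x_c)\cdot v>|x-x_c|\cos\theta\}$. *)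

From Stdlib Require Import Reals Lra.
Open Scope R_scope.

Record V3 := mkV3 { vx : R; vy : R; vz : R }.

Definition vadd (p q : V3) : V3 := mkV3 (vx p + vx q) (vy p + vy q) (vz p + vz q).
Definition vsub (p q : V3) : V3 := mkV3 (vx p - vx q) (vy p - vy q) (vz p - vz q).
Definition vscale (s : R) (p : V3) : V3 := mkV3 (s * vx p) (s * vy p) (s * vz p).
Definition dot (p q : V3) : R := vx p * vx q + vy p * vy q + vz p * vz q.
Definition vnorm (p : V3) : R := sqrt (dot p p).
Definition dist (p q : V3) : R := vnorm (vsub p q).

(* An open cuboid: the image of ]0,a[ x ]0,b[ x ]0,c[ under the rigid motion
   (s,t,r) |-> o + s u1 + t u2 + r u3, where (u1,u2,u3) is orthonormal. *)
Record cuboid := mkCuboid {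
  c_o : V3; c_u1 : V3; c_u2 : V3; c_u3 : V3;
  c_a : R; c_b : R; c_c : R }.

Definition valid_cuboid (C : cuboid) : Prop :=
  0 < c_a C /\ 0 < c_b C /\ 0 < c_c C /\
  dot (c_u1 C) (c_u1 C) = 1 /\ dot (c_u2 C) (c_u2 C) = 1 /\
  dot (c_u3 C) (c_u3 C) = 1 /\ dot (c_u1 C) (c_u2 C) = 0 /\
  dot (c_u1 C) (c_u3 C) = 0 /\ dot (c_u2 C) (c_u3 C) = 0.

Definition cuboid_point (C : cuboid) (s t r : R) : V3 :=
  vadd (c_o C) (vadd (vscale s (c_u1 C)) (vadd (vscale t (c_u2 C)) (vscale r (c_u3 C)))).

Definition cuboid_set (C : cuboid) (x : V3) : Prop :=
  exists s t r, 0 < s < c_a C /\ 0 < t < c_b C /\ 0 < r < c_c C /\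
    x = cuboid_point C s t r.

Definition cuboid_vertex (C : cuboid) (x : V3) : Prop :=
  exists e1 e2 e3 : bool,
    x = cuboid_point C (if e1 then c_a C else 0) (if e2 then c_b C else 0)
                       (if e3 then c_c C else 0).

Definition convex (S : V3 -> Prop) : Prop :=
  forall y z t, S y -> S z -> 0 <= t <= 1 ->
    S (vadd (vscale t y) (vscale (1 - t) z)).

Definition convex_hull (S : V3 -> Prop) (x : V3) : Prop :=
  forall K : V3 -> Prop, convex K -> (forall y, S y -> K y) -> K x.

Definition closure (S : V3 -> Prop) (x : V3) : Prop :=
  forall eps, 0 < eps -> exists y, S y /\ dist x y < eps.

Definition extreme_point (K : V3 -> Prop) (x : V3) : Prop :=
  K x /\ forall y z t, K y -> K z -> 0 < t < 1 ->
    x = vadd (vscale t y) (vscale (1 - t) z) -> y = x /\ z = x.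

(* A vertex of a (possibly open) convex polytope Q: an extreme point of its closure *)
Definition polytope_vertex (Q : V3 -> Prop) (x : V3) : Prop :=
  extreme_point (closure Q) x.

Definition is_lower_bound (E : R -> Prop) (m : R) : Prop := forall y, E y -> m <= y.
Definition is_glb (E : R -> Prop) (m : R) : Prop :=
  is_lower_bound E m /\ forall b, is_lower_bound E b -> b <= m.

Definition point_set_dist (x : V3) (S : V3 -> Prop) (r : R) : Prop :=
  is_glb (fun d => exists y, S y /\ d = dist x y) r.

Definition hausdorff_dist (P P' : V3 -> Prop) (h : R) : Prop :=
  exists h1 h2,
    is_lub (fun d => exists x, P x /\ point_set_dist x P' d) h1 /\
    is_lub (fun d => exists x', P' x' /\ point_set_dist x' P d) h2 /\
    h = Rmax h1 h2.

(* Open spherical cone with vertex xc, unit axis v, opening angle 2 theta *)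
Definition spherical_cone (xc v : V3) (theta : R) (x : V3) : Prop :=
  x <> xc /\ dot (vsub x xc) v > dist x xc * cos theta.

(* Let [G] be the diagonal of the octant spanned by [P] at its vertex [xc], so that
   [|z - xc| <= (z - xc).G] on [P] with [|G| = sqrt 3], and let [w] be the unit vector from
   [xc] towards its nearest point in the closed cuboid [P'], so that [(y - xc).w >= r] on [P'],
   where [r = d(xc, P') = d_H(P, P')].  Every point of [P] is within [r] of [P'], hence
   [(x - xc).w >= 0] on [P]; every point of [P'] is within [r] of [P], and the resulting loss
   [(1 + |G|) r] is recovered from [3 (y - xc).w].  So [P u P'] lies in the closed cone
   [|z - xc| <= (z - xc).v] with [v = G + 3 w] and [|v| <= 5], which sits inside the open
   spherical cone of half-angle [pi/2 - 1/10] around [v]; that cone is convex and [xc] is an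
   extreme point of its closure. *)

From Pilot Require Import Defs.
From Stdlib Require Import Reals Lra Psatz Classical_Prop.
Open Scope R_scope.
Notation dist := Defs.dist.

Ltac vsimpl := repeat match goal with v : V3 |- _ => destruct v end;
  unfold vadd, vsub, vscale, dot in *; simpl in *.

Lemma dot_self_ge0 p : 0 <= dot p p.
Proof. destruct p; unfold dot; simpl; nra. Qed.

Lemma vnorm_ge0 p : 0 <= vnorm p.
Proof. apply sqrt_pos. Qed.

Lemma vnorm_sqr p : vnorm p * vnorm p = dot p p.
Proof. apply sqrt_sqrt, dot_self_ge0. Qed.

Lemma sqrt_le_of_le_sqr x y : 0 <= y -> x <= y * y -> sqrt x <= y.
Proof. intros Hy Hx. rewrite <- (sqrt_square y Hy). now apply sqrt_le_1_alt. Qed.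

Lemma dot_sqr_le p q : dot p q * dot p q <= dot p p * dot q q.
Proof.
  destruct p as [a b c], q as [d e f]; unfold dot; simpl.
  assert ((a*a+b*b+c*c)*(d*d+e*e+f*f) - (a*d+b*e+c*f)*(a*d+b*e+c*f) =
    (a*e-b*d)*(a*e-b*d) + (a*f-c*d)*(a*f-c*d) + (b*f-c*e)*(b*f-c*e)) by ring.
  pose proof (Rle_0_sqr (a*e-b*d)); pose proof (Rle_0_sqr (a*f-c*d));
  pose proof (Rle_0_sqr (b*f-c*e)); unfold Rsqr in *; lra.
Qed.

Lemma dot_le_vnorm_mul p q : dot p q <= vnorm p * vnorm q.
Proof.
  pose proof (dot_sqr_le p q). rewrite <- (vnorm_sqr p), <- (vnorm_sqr q) in H.
  pose proof (vnorm_ge0 p). pose proof (vnorm_ge0 q).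
  pose proof (Rmult_le_pos _ _ H0 H1). nra.
Qed.

Lemma vnorm_scale k p : vnorm (vscale k p) = Rabs k * vnorm p.
Proof.
  unfold vnorm. replace (dot (vscale k p) (vscale k p)) with (k² * dot p p)
    by (unfold Rsqr; vsimpl; ring).
  rewrite sqrt_mult_alt, sqrt_Rsqr_abs; [reflexivity | apply Rle_0_sqr].
Qed.

Lemma dot_ge_neg_vnorm_mul p q : - (vnorm p * vnorm q) <= dot p q.
Proof.
  pose proof (dot_le_vnorm_mul (vscale (-1) p) q) as H.
  rewrite vnorm_scale, Rabs_left in H by lra.
  replace (dot (vscale (-1) p) q) with (- dot p q) in H by (vsimpl; ring). lra.
Qed.

Lemma dot_le_vnorm p w : dot w w <= 1 -> dot p w <= vnorm p.
Proof.
  intros Hw. pose proof (dot_le_vnorm_mul p w).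
  assert (vnorm w <= 1) by (apply sqrt_le_of_le_sqr; lra).
  pose proof (vnorm_ge0 p). pose proof (vnorm_ge0 w). nra.
Qed.

Lemma vnorm_add_le p q : vnorm (vadd p q) <= vnorm p + vnorm q.
Proof.
  pose proof (vnorm_ge0 p); pose proof (vnorm_ge0 q).
  apply sqrt_le_of_le_sqr; [lra|].
  replace (dot (vadd p q) (vadd p q)) with (dot p p + 2 * dot p q + dot q q) by (vsimpl; ring).
  pose proof (dot_le_vnorm_mul p q). rewrite <- (vnorm_sqr p), <- (vnorm_sqr q). nra.
Qed.

Lemma vnorm_sub_sym p q : vnorm (vsub p q) = vnorm (vsub q p).
Proof. unfold vnorm; f_equal; vsimpl; ring. Qed.

Lemma vnorm_sub_eq0 p q : vnorm (vsub p q) = 0 -> p = q.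
Proof.
  intros H. apply sqrt_eq_0 in H; [|apply dot_self_ge0].
  destruct p as [x y z], q as [x' y' z']; unfold vsub, dot in H; simpl in H.
  pose proof (Rle_0_sqr (x - x')); pose proof (Rle_0_sqr (y - y'));
  pose proof (Rle_0_sqr (z - z')); unfold Rsqr in *.
  f_equal; nra.
Qed.

Lemma vnorm_sub_pos p q : p <> q -> 0 < vnorm (vsub p q).
Proof.
  intros Hpq. destruct (Rle_lt_or_eq_dec _ _ (vnorm_ge0 (vsub p q))) as [|Heq]; [assumption|].
  now apply eq_sym, vnorm_sub_eq0 in Heq.
Qed.

Lemma dist_triangle p q r : dist p r <= dist p q + dist q r.
Proof.
  unfold dist. replace (vsub p r) with (vadd (vsub p q) (vsub q r)) by (vsimpl; f_equal; ring).
  apply vnorm_add_le.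
Qed.

Lemma dist_toward p m l : 0 <= l ->
  dist p (vadd (vscale (1 - l) p) (vscale l m)) = l * dist p m.
Proof.
  intros Hl. unfold dist.
  replace (vsub p (vadd (vscale (1 - l) p) (vscale l m))) with (vscale l (vsub p m))
    by (vsimpl; f_equal; ring).
  now rewrite vnorm_scale, Rabs_pos_eq.
Qed.

Lemma exists_small_ratio d eps : 0 <= d -> 0 < eps -> exists l, 0 < l < 1 /\ l * d < eps.
Proof.
  intros Hd Heps. set (l := Rmin (1/2) (eps / (2 * (d + 1)))).
  assert (Hq : 0 < eps / (2 * (d + 1))) by (apply Rdiv_lt_0_compat; lra).
  assert (Hl : l <= eps / (2 * (d + 1))) by apply Rmin_r.
  assert (Hl' : l <= 1/2) by apply Rmin_l.
  assert (Hl0 : 0 < l) by (apply Rmin_glb_lt; lra).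
  exists l. split; [lra|].
  apply Rle_lt_trans with (eps / (2 * (d + 1)) * d); [now apply Rmult_le_compat_r|].
  unfold Rdiv. rewrite Rmult_assoc.
  assert (/ (2 * (d + 1)) * d < 1).
  { apply Rmult_lt_reg_l with (2 * (d + 1)); [lra|]. field_simplify; lra. }
  nra.
Qed.

Definition frame_comb (a1 a2 a3 : R) (u1 u2 u3 : V3) : V3 :=
  vadd (vscale a1 u1) (vadd (vscale a2 u2) (vscale a3 u3)).

Lemma dot_frame_comb_l a1 a2 a3 u1 u2 u3 w :
  dot (frame_comb a1 a2 a3 u1 u2 u3) w = a1 * dot u1 w + a2 * dot u2 w + a3 * dot u3 w.
Proof. unfold frame_comb; vsimpl; ring. Qed.

Lemma dot_frame_comb (C : cuboid) a1 a2 a3 b1 b2 b3 : valid_cuboid C ->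
  dot (frame_comb a1 a2 a3 (c_u1 C) (c_u2 C) (c_u3 C))
      (frame_comb b1 b2 b3 (c_u1 C) (c_u2 C) (c_u3 C)) = a1 * b1 + a2 * b2 + a3 * b3.
Proof.
  intros (_ & _ & _ & H11 & H22 & H33 & H12 & H13 & H23).
  transitivity (a1 * b1 * dot (c_u1 C) (c_u1 C) + a2 * b2 * dot (c_u2 C) (c_u2 C)
    + a3 * b3 * dot (c_u3 C) (c_u3 C) + (a1 * b2 + a2 * b1) * dot (c_u1 C) (c_u2 C)
    + (a1 * b3 + a3 * b1) * dot (c_u1 C) (c_u3 C) + (a2 * b3 + a3 * b2) * dot (c_u2 C) (c_u3 C)).
  - unfold frame_comb, vadd, vscale, dot; simpl; ring.
  - rewrite H11, H22, H33, H12, H13, H23; ring.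
Qed.

Lemma cuboid_point_sub (C : cuboid) s t r s' t' r' :
  vsub (cuboid_point C s t r) (cuboid_point C s' t' r') =
  frame_comb (s - s') (t - t') (r - r') (c_u1 C) (c_u2 C) (c_u3 C).
Proof. unfold cuboid_point, frame_comb. vsimpl. f_equal; ring. Qed.

Lemma vnorm_cuboid_point_sub (C : cuboid) s t r s' t' r' : valid_cuboid C ->
  vnorm (vsub (cuboid_point C s t r) (cuboid_point C s' t' r')) =
  sqrt ((s - s') * (s - s') + (t - t') * (t - t') + (r - r') * (r - r')).
Proof. intros HC. unfold vnorm. now rewrite cuboid_point_sub, dot_frame_comb. Qed.

Lemma cuboid_point_comb (C : cuboid) s t r s' t' r' l :
  vadd (vscale (1 - l) (cuboid_point C s t r)) (vscale l (cuboid_point C s' t' r'))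
  = cuboid_point C ((1 - l) * s + l * s') ((1 - l) * t + l * t') ((1 - l) * r + l * r').
Proof. unfold cuboid_point. vsimpl. f_equal; ring. Qed.

Definition cuboid_center (C : cuboid) : V3 :=
  cuboid_point C (c_a C / 2) (c_b C / 2) (c_c C / 2).

Lemma cuboid_center_in (C : cuboid) : valid_cuboid C -> cuboid_set C (cuboid_center C).
Proof.
  intros (Ha & Hb & Hc & _). exists (c_a C / 2), (c_b C / 2), (c_c C / 2).
  repeat split; lra.
Qed.

Lemma cuboid_set_toward_center (C : cuboid) s t r l : valid_cuboid C ->
  0 <= s <= c_a C -> 0 <= t <= c_b C -> 0 <= r <= c_c C -> 0 < l < 1 ->
  cuboid_set C (vadd (vscale (1 - l) (cuboid_point C s t r)) (vscale l (cuboid_center C))).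
Proof.
  intros (Ha & Hb & Hc & _) Hs Ht Hr Hl. unfold cuboid_center. rewrite cuboid_point_comb.
  do 3 eexists; split; [|split; [|split; [|reflexivity]]]; split; nra.
Qed.

Lemma closure_mono (S T : V3 -> Prop) x :
  (forall y, S y -> T y) -> closure S x -> closure T x.
Proof. intros HST Hx eps Heps. destruct (Hx eps Heps) as (y & Hy & Hd). eauto. Qed.

Lemma cuboid_closure (C : cuboid) s t r : valid_cuboid C ->
  0 <= s <= c_a C -> 0 <= t <= c_b C -> 0 <= r <= c_c C ->
  closure (cuboid_set C) (cuboid_point C s t r).
Proof.
  intros HC Hs Ht Hr eps Heps.
  destruct (exists_small_ratio (dist (cuboid_point C s t r) (cuboid_center C)) eps
              (vnorm_ge0 _) Heps) as (l & Hl & Hsmall).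
  exists (vadd (vscale (1 - l) (cuboid_point C s t r)) (vscale l (cuboid_center C))).
  split; [now apply cuboid_set_toward_center | rewrite dist_toward; lra].
Qed.

Lemma cuboid_vertex_closure (C : cuboid) xc : valid_cuboid C -> cuboid_vertex C xc ->
  closure (cuboid_set C) xc.
Proof.
  intros HC (e1 & e2 & e3 & ->). pose proof HC as (Ha & Hb & Hc & _).
  apply cuboid_closure; auto; [destruct e1 | destruct e2 | destruct e3]; lra.
Qed.

Lemma glb_exists (E : R -> Prop) : (exists x, E x) -> (forall x, E x -> 0 <= x) ->
  exists m, is_glb E m.
Proof.
  intros [x0 Hx0] Hpos.
  destruct (completeness (fun z => E (- z))) as [m [Hub Hleast]].
  { exists 0. intros z Hz. apply Hpos in Hz. lra. }
  { exists (- x0). now rewrite Ropp_involutive. }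
  exists (- m). split.
  - intros y Hy. assert (- y <= m) by (apply Hub; now rewrite Ropp_involutive). lra.
  - intros b Hb. assert (m <= - b) by (apply Hleast; intros z Hz; apply Hb in Hz; lra). lra.
Qed.

Lemma glb_approx E m eps : is_glb E m -> 0 < eps -> exists e, E e /\ e < m + eps.
Proof.
  intros [_ Hgreatest] Heps. apply NNPP. intros Hnone.
  assert (m + eps <= m); [|lra].
  apply Hgreatest. intros y Hy. apply Rnot_lt_le. intros Hlt. eauto.
Qed.

Lemma point_set_dist_ge0 x S r : point_set_dist x S r -> 0 <= r.
Proof. intros [_ Hgreatest]. apply Hgreatest. intros d (y & _ & ->). apply vnorm_ge0. Qed.

Lemma cuboid_point_set_dist_exists (C : cuboid) x : valid_cuboid C ->
  exists d, point_set_dist x (cuboid_set C) d.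
Proof.
  intros HC. apply glb_exists.
  - exists (dist x (cuboid_center C)), (cuboid_center C). split; [now apply cuboid_center_in | reflexivity].
  - intros d (y & _ & ->). apply vnorm_ge0.
Qed.

Lemma point_set_dist_approx x S r eps : point_set_dist x S r -> 0 < eps ->
  exists y, S y /\ dist x y < r + eps.
Proof.
  intros Hr Heps. destruct (glb_approx _ _ _ Hr Heps) as (e & (y & Hy & ->) & He). eauto.
Qed.

Lemma point_set_dist_le_closure x S r q : point_set_dist x S r -> closure S q -> r <= dist x q.
Proof.
  intros [Hlower _] Hq. apply Rle_plus_epsilon. intros eps Heps.
  destruct (Hq eps Heps) as (y & Hy & Hqy).
  assert (r <= dist x y) by (apply Hlower; eauto).
  pose proof (dist_triangle x q y). lra.
Qed.

Lemma hausdorff_dist_sym P P' h : hausdorff_dist P P' h -> hausdorff_dist P' P h.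
Proof. intros (h1 & h2 & H1 & H2 & ->). exists h2, h1. split; [|split]; auto. apply Rmax_comm. Qed.

Lemma hausdorff_dist_approx P P' h x eps : hausdorff_dist P P' h -> P x ->
  (exists d, point_set_dist x P' d) -> 0 < eps -> exists y, P' y /\ dist x y < h + eps.
Proof.
  intros (h1 & h2 & [Hupper _] & _ & ->) Hx [d Hd] Heps.
  assert (d <= h1) by (apply Hupper; eauto).
  destruct (point_set_dist_approx x P' d eps Hd Heps) as (y & Hy & Hxy).
  exists y. split; [assumption|]. pose proof (Rmax_l h1 h2). lra.
Qed.

Definition clamp (a s : R) : R := Rmax 0 (Rmin a s).

Lemma clamp_between a s : 0 < a -> 0 <= clamp a s <= a.
Proof. intros. unfold clamp, Rmax, Rmin. destruct (Rle_dec a s), (Rle_dec 0 _); lra. Qed.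

Lemma clamp_projection a s y : 0 < a -> 0 <= y <= a -> 0 <= (y - clamp a s) * (clamp a s - s).
Proof. intros. unfold clamp, Rmax, Rmin. destruct (Rle_dec a s), (Rle_dec 0 _); nra. Qed.

(* Clamping the frame coordinates of [x] gives its nearest point [p] in the closed cuboid;
   the conclusion is the obtuse-angle characterization of that projection. *)
Lemma cuboid_nearest_point (C : cuboid) x : valid_cuboid C ->
  exists s t r, 0 <= s <= c_a C /\ 0 <= t <= c_b C /\ 0 <= r <= c_c C /\
    forall y, cuboid_set C y ->
      0 <= dot (vsub y (cuboid_point C s t r)) (vsub (cuboid_point C s t r) x).
Proof.
  intros HC. pose proof HC as (Ha & Hb & Hc & _).
  set (x1 := dot (vsub x (c_o C)) (c_u1 C)).
  set (x2 := dot (vsub x (c_o C)) (c_u2 C)).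
  set (x3 := dot (vsub x (c_o C)) (c_u3 C)).
  exists (clamp (c_a C) x1), (clamp (c_b C) x2), (clamp (c_c C) x3).
  split; [|split; [|split]]; try now apply clamp_between.
  intros y (t1 & t2 & t3 & H1 & H2 & H3 & ->). rewrite cuboid_point_sub.
  pose proof (clamp_projection (c_a C) x1 t1 Ha ltac:(lra)).
  pose proof (clamp_projection (c_b C) x2 t2 Hb ltac:(lra)).
  pose proof (clamp_projection (c_c C) x3 t3 Hc ltac:(lra)).
  set (c1 := clamp (c_a C) x1); set (c2 := clamp (c_b C) x2); set (c3 := clamp (c_c C) x3).
  set (d := frame_comb (t1 - c1) (t2 - c2) (t3 - c3) (c_u1 C) (c_u2 C) (c_u3 C)).
  replace (dot d (vsub (cuboid_point C c1 c2 c3) x)) with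
    (dot d (frame_comb c1 c2 c3 (c_u1 C) (c_u2 C) (c_u3 C)) - dot d (vsub x (c_o C)))
    by (unfold cuboid_point, frame_comb; vsimpl; ring).
  unfold d. rewrite dot_frame_comb, dot_frame_comb_l by assumption.
  replace (dot (c_u1 C) (vsub x (c_o C))) with x1 by (unfold x1; vsimpl; ring).
  replace (dot (c_u2 C) (vsub x (c_o C))) with x2 by (unfold x2; vsimpl; ring).
  replace (dot (c_u3 C) (vsub x (c_o C))) with x3 by (unfold x3; vsimpl; ring).
  unfold c1, c2, c3; nra.
Qed.

Lemma cuboid_supporting_halfspace (C : cuboid) x r : valid_cuboid C ->
  point_set_dist x (cuboid_set C) r ->
  exists w, dot w w <= 1 /\ forall y, cuboid_set C y -> r <= dot (vsub y x) w.
Proof.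
  intros HC Hr.
  destruct (cuboid_nearest_point C x HC) as (s & t & u & Hs & Ht & Hu & Hsupp).
  set (p := cuboid_point C s t u) in Hsupp.
  assert (Hrp : r <= vnorm (vsub p x)).
  { rewrite vnorm_sub_sym. apply point_set_dist_le_closure with (cuboid_set C); [assumption|].
    now apply cuboid_closure. }
  set (h := vnorm (vsub p x)) in Hrp.
  destruct (Rle_lt_or_eq_dec 0 h (vnorm_ge0 _)) as [Hh | Hh].
  - exists (vscale (/ h) (vsub p x)). split.
    + replace (dot (vscale (/ h) (vsub p x)) (vscale (/ h) (vsub p x)))
        with (/ h * / h * dot (vsub p x) (vsub p x)) by (vsimpl; ring).
      rewrite <- vnorm_sqr. fold h. field_simplify; lra.
    + intros y Hy. specialize (Hsupp y Hy).
      replace (dot (vsub y x) (vscale (/ h) (vsub p x)))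
        with (/ h * (dot (vsub y p) (vsub p x) + dot (vsub p x) (vsub p x))) by (vsimpl; ring).
      rewrite <- vnorm_sqr. fold h.
      apply Rmult_le_reg_l with h; [assumption|].
      rewrite <- Rmult_assoc, Rinv_r, Rmult_1_l by lra. nra.
  - exists (mkV3 0 0 0). split; [unfold dot; simpl; lra|].
    intros y _. replace (dot (vsub y x) (mkV3 0 0 0)) with 0 by (vsimpl; ring). lra.
Qed.

(* [S] lies in the closed cone of apex [xc] and axis [v] whose half-angle has cosine [1 / vnorm v]. *)
Definition lies_in_cone (xc v : V3) (S : V3 -> Prop) : Prop :=
  forall z, S z -> vnorm (vsub z xc) <= dot (vsub z xc) v.

Definition sign_of (b : bool) : R := if b then -1 else 1.

(* Seen from a vertex the cuboid spans one octant of its frame, whose diagonal [G] makes an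
   angle of cosine at least [1 / sqrt 3] with every direction in it. *)
Lemma cuboid_vertex_cone (C : cuboid) xc : valid_cuboid C -> cuboid_vertex C xc ->
  exists G, dot G G = 3 /\ lies_in_cone xc G (cuboid_set C).
Proof.
  intros HC (b1 & b2 & b3 & ->).
  exists (frame_comb (sign_of b1) (sign_of b2) (sign_of b3) (c_u1 C) (c_u2 C) (c_u3 C)).
  split; [rewrite dot_frame_comb by assumption; destruct b1, b2, b3; unfold sign_of; ring|].
  intros x (s & t & r & Hs & Ht & Hr & ->).
  unfold vnorm. rewrite cuboid_point_sub, !dot_frame_comb by assumption.
  set (d1 := (s - if b1 then c_a C else 0) * sign_of b1).
  set (d2 := (t - if b2 then c_b C else 0) * sign_of b2).
  set (d3 := (r - if b3 then c_c C else 0) * sign_of b3).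
  assert (D1 : 0 <= d1 /\ (s - if b1 then c_a C else 0) * (s - if b1 then c_a C else 0) = d1 * d1)
    by (unfold d1, sign_of; destruct b1; split; try ring; lra).
  assert (D2 : 0 <= d2 /\ (t - if b2 then c_b C else 0) * (t - if b2 then c_b C else 0) = d2 * d2)
    by (unfold d2, sign_of; destruct b2; split; try ring; lra).
  assert (D3 : 0 <= d3 /\ (r - if b3 then c_c C else 0) * (r - if b3 then c_c C else 0) = d3 * d3)
    by (unfold d3, sign_of; destruct b3; split; try ring; lra).
  destruct D1 as [D1 ->], D2 as [D2 ->], D3 as [D3 ->].
  apply sqrt_le_of_le_sqr; [lra | nra].
Qed.

Lemma lies_in_cone_shift xc G w k (S : V3 -> Prop) : lies_in_cone xc G S -> 0 <= k ->
  (forall z, S z -> 0 <= dot (vsub z xc) w) -> lies_in_cone xc (vadd G (vscale k w)) S.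
Proof.
  intros HG Hk Hw z Hz. specialize (HG z Hz). specialize (Hw z Hz).
  replace (dot (vsub z xc) (vadd G (vscale k w)))
    with (dot (vsub z xc) G + k * dot (vsub z xc) w) by (vsimpl; ring).
  nra.
Qed.

Lemma hausdorff_dist_halfspace (P P' : V3 -> Prop) r xc w :
  hausdorff_dist P P' r -> (forall x, P x -> exists d, point_set_dist x P' d) ->
  dot w w <= 1 -> (forall y, P' y -> r <= dot (vsub y xc) w) ->
  forall x, P x -> 0 <= dot (vsub x xc) w.
Proof.
  intros Hh Hdist Hw HP' x Hx. apply Rle_plus_epsilon. intros eps Heps.
  destruct (hausdorff_dist_approx P P' r x eps Hh Hx (Hdist x Hx) Heps) as (y & Hy & Hxy).
  specialize (HP' y Hy). pose proof (dot_le_vnorm (vsub y x) w Hw).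
  replace (dot (vsub y xc) w) with (dot (vsub x xc) w + dot (vsub y x) w) in HP' by (vsimpl; ring).
  unfold dist in Hxy. rewrite vnorm_sub_sym in Hxy. lra.
Qed.

(* Passing from a point of [P] to a point of [P'] within [r + eps] costs at most
   [(1 + vnorm G) (r + eps)], and the component along [w] pays for [r]. *)
Lemma hausdorff_dist_cone (P P' : V3 -> Prop) r xc G w k :
  hausdorff_dist P P' r -> (forall y, P' y -> exists d, point_set_dist y P d) -> 0 <= r ->
  lies_in_cone xc G P -> 1 + vnorm G <= k -> (forall y, P' y -> r <= dot (vsub y xc) w) ->
  lies_in_cone xc (vadd G (vscale k w)) P'.
Proof.
  intros Hh Hdist Hr HG Hk HP' y Hy. apply Rle_plus_epsilon. intros eps Heps.
  assert (Hkpos : 0 < k) by (pose proof (vnorm_ge0 G); lra).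
  destruct (hausdorff_dist_approx P' P r y (eps / k) (hausdorff_dist_sym _ _ _ Hh) Hy
              (Hdist y Hy) ltac:(apply Rdiv_lt_0_compat; lra)) as (x & Hx & Hyx).
  unfold dist in Hyx. specialize (HG x Hx). specialize (HP' y Hy).
  pose proof (dot_ge_neg_vnorm_mul (vsub y x) G).
  pose proof (vnorm_ge0 G). pose proof (vnorm_ge0 (vsub y x)).
  replace (dot (vsub y xc) (vadd G (vscale k w)))
    with (dot (vsub x xc) G + dot (vsub y x) G + k * dot (vsub y xc) w) by (vsimpl; ring).
  assert (Htri : vnorm (vsub y xc) <= vnorm (vsub y x) + vnorm (vsub x xc)).
  { replace (vsub y xc) with (vadd (vsub y x) (vsub x xc)) by (vsimpl; f_equal; ring).
    apply vnorm_add_le. }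
  assert (Hbudget : (1 + vnorm G) * vnorm (vsub y x) <= k * r + eps).
  { apply Rle_trans with (k * vnorm (vsub y x)); [nra|].
    replace eps with (k * (eps / k)) by (field; lra). nra. }
  nra.
Qed.

(* From an interior point [xc] both displacements [+d u1] and [-d u1] stay in the cuboid,
   and they cannot both point into a cone of apex [xc]. *)
Lemma cuboid_apex_notin (C : cuboid) xc v : valid_cuboid C ->
  lies_in_cone xc v (cuboid_set C) -> ~ cuboid_set C xc.
Proof.
  intros HC Hcone Hxc. pose proof Hxc as (s & t & r & Hs & Ht & Hr & Hxc_eq).
  set (d := Rmin s (c_a C - s) / 2).
  assert (Hd : 0 < d /\ d < s /\ s + d < c_a C).
  { assert (0 < Rmin s (c_a C - s)) by (apply Rmin_glb_lt; lra).
    pose proof (Rmin_l s (c_a C - s)). pose proof (Rmin_r s (c_a C - s)). unfold d; lra. }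
  assert (Hshift : forall e, -d <= e <= d ->
            Rabs e <= e * dot (c_u1 C) v).
  { intros e He.
    assert (Hin : cuboid_set C (cuboid_point C (s + e) t r)) by (exists (s + e), t, r; repeat split; lra).
    specialize (Hcone _ Hin).
    rewrite Hxc_eq, vnorm_cuboid_point_sub, cuboid_point_sub, dot_frame_comb_l in Hcone
      by assumption.
    replace (s + e - s) with e in Hcone by ring.
    replace (t - t) with 0 in Hcone by ring. replace (r - r) with 0 in Hcone by ring.
    replace (e * e + 0 * 0 + 0 * 0) with (e²) in Hcone by (unfold Rsqr; ring).
    rewrite sqrt_Rsqr_abs in Hcone. lra. }
  pose proof (Hshift d ltac:(lra)) as Hplus. pose proof (Hshift (- d) ltac:(lra)) as Hminus.
  rewrite Rabs_pos_eq in Hplus by lra. rewrite Rabs_Ropp, Rabs_pos_eq in Hminus by lra.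
  nra.
Qed.

Lemma lies_in_cone_vnorm_ge1 xc v (S : V3 -> Prop) z :
  lies_in_cone xc v S -> S z -> z <> xc -> 1 <= vnorm v.
Proof.
  intros Hcone Hz Hne. specialize (Hcone z Hz).
  pose proof (dot_le_vnorm_mul (vsub z xc) v). pose proof (vnorm_sub_pos z xc Hne).
  apply Rmult_le_reg_l with (vnorm (vsub z xc)); lra.
Qed.

Lemma lies_in_cone_spherical_cone xc v al (S : V3 -> Prop) z :
  lies_in_cone xc v S -> 0 < vnorm v -> vnorm v * cos al < 1 -> S z -> z <> xc ->
  spherical_cone xc (vscale (/ vnorm v) v) al z.
Proof.
  intros Hcone Hv Hal Hz Hne. split; [assumption|]. unfold dist.
  specialize (Hcone z Hz). pose proof (vnorm_sub_pos z xc Hne).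
  replace (dot (vsub z xc) (vscale (/ vnorm v) v)) with (dot (vsub z xc) v / vnorm v)
    by (unfold Rdiv; vsimpl; ring).
  apply Rlt_le_trans with (vnorm (vsub z xc) / vnorm v).
  - apply Rmult_lt_reg_r with (vnorm v); [assumption|].
    unfold Rdiv. rewrite !Rmult_assoc, Rinv_l, Rmult_1_r by lra. nra.
  - apply Rmult_le_compat_r; [left; now apply Rinv_0_lt_compat | assumption].
Qed.

Lemma vnorm_normalize v : 0 < vnorm v -> vnorm (vscale (/ vnorm v) v) = 1.
Proof.
  intros Hv. rewrite vnorm_scale, Rabs_pos_eq by (left; now apply Rinv_0_lt_compat).
  field. lra.
Qed.

Lemma spherical_cone_convex xc v al : 0 <= cos al -> convex (spherical_cone xc v al).
Proof.
  intros Hcos y z t [_ Hy] [_ Hz] Ht. unfold dist in *.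
  set (x := vadd (vscale t y) (vscale (1 - t) z)).
  set (dx := vadd (vscale t (vsub y xc)) (vscale (1 - t) (vsub z xc))).
  assert (Hx : vsub x xc = dx) by (unfold x, dx; vsimpl; f_equal; ring).
  assert (Hnorm : vnorm dx <= t * vnorm (vsub y xc) + (1 - t) * vnorm (vsub z xc)).
  { eapply Rle_trans; [apply vnorm_add_le|].
    rewrite !vnorm_scale, !Rabs_pos_eq by lra. lra. }
  assert (Hdot : dot dx v > vnorm dx * cos al).
  { replace (dot dx v) with (t * dot (vsub y xc) v + (1 - t) * dot (vsub z xc) v)
      by (unfold dx; vsimpl; ring).
    apply Rle_lt_trans with ((t * vnorm (vsub y xc) + (1 - t) * vnorm (vsub z xc)) * cos al);
      [now apply Rmult_le_compat_r|].
    destruct (Rle_lt_or_eq_dec 0 t (proj1 Ht)) as [Ht0 | <-]; nra. }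
  split; [|unfold dist; now rewrite Hx].
  intros Hxc. rewrite Hxc in Hx. rewrite <- Hx in Hdot.
  replace (vsub xc xc) with (mkV3 0 0 0) in Hdot by (vsimpl; f_equal; ring).
  unfold vnorm, dot in Hdot; simpl in Hdot.
  replace (0 * 0 + 0 * 0 + 0 * 0) with 0 in Hdot by ring. rewrite sqrt_0 in Hdot. lra.
Qed.

Lemma closure_spherical_cone (Q : V3 -> Prop) xc v al : vnorm v = 1 -> 0 <= cos al ->
  (forall x, Q x -> spherical_cone xc v al x) ->
  forall x, closure Q x -> vnorm (vsub x xc) * cos al <= dot (vsub x xc) v.
Proof.
  intros Hv Hcos HQ x Hx. apply Rle_plus_epsilon. intros eps Heps.
  destruct (Hx (eps / 2) ltac:(lra)) as (q & Hq & Hxq). apply HQ in Hq as [_ Hq].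
  unfold dist in *.
  replace (dot (vsub x xc) v) with (dot (vsub q xc) v + dot (vsub x q) v) by (vsimpl; ring).
  pose proof (dot_ge_neg_vnorm_mul (vsub x q) v). rewrite Hv in H.
  assert (Htri : vnorm (vsub x xc) <= vnorm (vsub q xc) + vnorm (vsub x q)).
  { replace (vsub x xc) with (vadd (vsub q xc) (vsub x q)) by (vsimpl; f_equal; ring).
    apply vnorm_add_le. }
  pose proof (COS_bound al) as [_ Hcos1]. pose proof (vnorm_ge0 (vsub x q)).
  pose proof (Rmult_le_compat_r (cos al) _ _ Hcos Htri).
  assert (vnorm (vsub x q) * cos al <= vnorm (vsub x q)) by nra.
  lra.
Qed.

(* In a convex combination [xc = t y + (1 - t) z] the axial components add up to zero,
   while each is at least [cos al] times a length. *)
Lemma spherical_cone_apex_vertex (Q : V3 -> Prop) xc v al : vnorm v = 1 -> 0 < cos al ->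
  (forall x, Q x -> spherical_cone xc v al x) -> closure Q xc -> polytope_vertex Q xc.
Proof.
  intros Hv Hcos HQ Hxc. split; [assumption|].
  intros y z t Hy Hz Ht Heq.
  pose proof (closure_spherical_cone Q xc v al Hv ltac:(lra) HQ y Hy) as Ay.
  pose proof (closure_spherical_cone Q xc v al Hv ltac:(lra) HQ z Hz) as Az.
  assert (Hsum : t * dot (vsub y xc) v + (1 - t) * dot (vsub z xc) v = 0).
  { rewrite Heq. vsimpl. ring. }
  assert (Hcy : 0 <= vnorm (vsub y xc) * cos al)
    by (apply Rmult_le_pos; [apply vnorm_ge0 | lra]).
  assert (Hcz : 0 <= vnorm (vsub z xc) * cos al)
    by (apply Rmult_le_pos; [apply vnorm_ge0 | lra]).
  pose proof (Rmult_le_compat_l t _ _ ltac:(lra) Ay).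
  pose proof (Rmult_le_compat_l (1 - t) _ _ ltac:(lra) Az).
  assert (Hy0 : t * (vnorm (vsub y xc) * cos al) = 0) by nra.
  assert (Hz0 : (1 - t) * (vnorm (vsub z xc) * cos al) = 0) by nra.
  apply Rmult_integral in Hy0 as [|Hy0]; [lra|]. apply Rmult_integral in Hy0 as [Hy0|]; [|lra].
  apply Rmult_integral in Hz0 as [|Hz0]; [lra|]. apply Rmult_integral in Hz0 as [Hz0|]; [|lra].
  split; now apply vnorm_sub_eq0.
Qed.

Theorem mainTheorem19 :
  exists alpha' : R, 0 < alpha' < PI / 2 /\
    forall (C C' : cuboid) (xc : V3),
      valid_cuboid C -> valid_cuboid C' ->
      cuboid_vertex C xc ->
      (exists r, point_set_dist xc (cuboid_set C') r /\
                 hausdorff_dist (cuboid_set C) (cuboid_set C') r) ->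
      let Q := convex_hull (fun x => cuboid_set C x \/ cuboid_set C' x) in
      polytope_vertex Q xc /\
      exists v : V3, vnorm v = 1 /\
        (forall x, Q x -> spherical_cone xc v alpha' x).
Proof.
  exists (PI / 2 - 1 / 10).
  assert (Hcos : 0 < cos (PI / 2 - 1 / 10) < 1 / 10).
  { rewrite cos_shift. split; [apply sin_gt_0 | apply sin_lt_x]; pose proof PI2_1; lra. }
  split; [pose proof PI2_1; lra|].
  intros C C' xc HC HC' Hvert (r & Hr & Hh) Q.
  destruct (cuboid_vertex_cone C xc HC Hvert) as (G & HG3 & HG).
  destruct (cuboid_supporting_halfspace C' xc r HC' Hr) as (w & Hw & Hw').
  assert (HGn : vnorm G <= 2) by (apply sqrt_le_of_le_sqr; lra).
  assert (Hwn : vnorm w <= 1) by (apply sqrt_le_of_le_sqr; lra).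
  set (v := vadd G (vscale 3 w)).
  assert (HP : lies_in_cone xc v (cuboid_set C)).
  { apply lies_in_cone_shift; [assumption | lra |].
    apply hausdorff_dist_halfspace with (cuboid_set C') r; try assumption.
    intros x _. now apply cuboid_point_set_dist_exists. }
  assert (HP' : lies_in_cone xc v (cuboid_set C')).
  { apply hausdorff_dist_cone with (cuboid_set C) r; try assumption; [| | lra].
    - intros y _. now apply cuboid_point_set_dist_exists.
    - now apply point_set_dist_ge0 with xc (cuboid_set C'). }
  set (S := fun x => cuboid_set C x \/ cuboid_set C' x).
  assert (HS : lies_in_cone xc v S) by (intros z [Hz | Hz]; auto).
  assert (Hne : forall z, S z -> z <> xc).
  { intros z [Hz | Hz] ->; [now apply (cuboid_apex_notin C xc v) | now apply (cuboid_apex_notin C' xc v)]. }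
  assert (Hcenter : S (cuboid_center C)) by (left; now apply cuboid_center_in).
  assert (Hv1 : 1 <= vnorm v) by (apply lies_in_cone_vnorm_ge1 with xc S (cuboid_center C); auto).
  assert (Hv5 : vnorm v <= 5).
  { eapply Rle_trans; [apply vnorm_add_le|]. rewrite vnorm_scale, Rabs_pos_eq; lra. }
  assert (HQ : forall x, Q x -> spherical_cone xc (vscale (/ vnorm v) v) (PI / 2 - 1 / 10) x).
  { intros x Hx. apply Hx; [apply spherical_cone_convex; lra|].
    intros z Hz. apply lies_in_cone_spherical_cone with S; auto; [lra | nra]. }
  split.
  - apply spherical_cone_apex_vertex with (vscale (/ vnorm v) v) (PI / 2 - 1 / 10);
      [apply vnorm_normalize; lra | lra | assumption |].
    apply closure_mono with (cuboid_set C); [intros y Hy K _ HK; apply HK; now left|].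
    now apply cuboid_vertex_closure.
  - exists (vscale (/ vnorm v) v). split; [apply vnorm_normalize; lra | assumption].
Qed.
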